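(* Consider an unweighted ESP instance on $G=(V,E)$, $|V|=n$, root $r$, and let $L^*$ be the minimum total latency of a feasible expanding search pattern. For each $k\in\{1,\dots,n\}$ let $T_k$ be the tree returned by Garg's 2-approximation algorithm for the rooted $k$-MST problem (a subtree of $G$ containing $r$ with exactly $k$ vertices whose length $\ell(T_k)=\sum_{e\in E(T_k)}\ell_e$ is at most twice the minimum length of such a tree), where $T_1=(\{r\},\emptyset)$. Let $H$ be the directed graph with vertex set $\{1,\dots,n\}$, arcs $(i,j)$ for all $i<j$, and arc costs $c_{i,j}=(n-i)\,\ell(T_j)$. Then a shortest $(1,n)$-path in $H$ has cost at most $2eL^*$.
   Context: Unweighted ESP: connected undirected graph $G=(V,E)$, root $r\in V$, edge lengths $\ell_e\in\mathbb{Z}_{>0}$, all vertex weights $w_v=1$. An expanding search pattern is a sequence of edges $\sigma=(e_1,\dots,e_m)$ with $r\in e_1$ such that $\{e_1,\dots,e_i\}$ forms a tree in $G$ for every $i$; it is feasible if it visits every vertex. For $v\ne r$, $k_v=\min\{i:v\in e_i\}$, $k_r=0$, latency $L_v(\sigma)=\sum_{i=1}^{k_v}\ell_{e_i}$; total latency $L(\sigma)=\sum_{v\in V}L_v(\sigma)$. The cost of a path in $H$ is the sum of its arc costs. *)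

From HB Require Import structures.
From mathcomp Require Import all_boot all_order all_algebra.
From mathcomp Require Import reals.
From mathcomp Require Import sequences.
Set Implicit Arguments. Unset Strict Implicit. Unset Printing Implicit Defensive.

Section ESP.
Variables (V E : finType) (ends : E -> V * V) (len : E -> nat) (r : V).

Definition inc (e : E) (v : V) : bool := (v == (ends e).1) || (v == (ends e).2).

Definition simple_graph : Prop :=
  (forall e, (ends e).1 != (ends e).2) /\
  (forall e f, inc e =1 inc f -> e = f).
Definition adj_in (F : {set E}) : rel V :=
  fun x y => [exists e in F, inc e x && inc e y && (x != y)].
Definition connected_graph : Prop := forall v, connect (adj_in setT) r v.

Definition rverts (F : {set E}) : {set V} := r |: [set v | [exists e in F, inc e v]].

Definition rooted_tree (F : {set E}) : Prop :=
  (forall v, v \in rverts F -> connect (adj_in F) r v) /\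
  #|rverts F| = (#|F| + 1)%N.

Definition lenT (F : {set E}) : nat := \sum_(e in F) len e.

Definition prefix_set (s : seq E) (i : nat) : {set E} := [set e in take i s].
Definition expanding (s : seq E) : Prop :=
  (match s with [::] => True | e1 :: _ => inc e1 r end) /\
  forall i, (1 <= i <= size s)%N -> rooted_tree (prefix_set s i).
Definition feasible (s : seq E) : Prop :=
  expanding s /\ forall v, v != r -> has (inc^~ v) s.

(* latency: k_v = first (1-based) index i with v in e_i; k_r = 0 *)
Definition latency (s : seq E) (v : V) : nat :=
  if v == r then 0%N else \sum_(e <- take (find (inc^~ v) s).+1 s) len e.
Definition total_latency (s : seq E) : nat := \sum_(v : V) latency s v.

Definition kmst_2approx (T : nat -> {set E}) : Prop :=
  T 1%N = set0 /\
  forall k, (1 <= k <= #|V|)%N ->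
    [/\ rooted_tree (T k), #|rverts (T k)| = k &
        forall F, rooted_tree F -> #|rverts F| = k -> (lenT (T k) <= 2 * lenT F)%N].

(* Paths in H from 1 to n: vertex sequence 1 :: P, strictly increasing, ending in n.
   Cost of arc (i,j) is (n - i) * len(T_j). *)
Definition H_path (n : nat) (P : seq nat) : bool := path ltn 1%N P && (last 1%N P == n).
Definition H_cost (n : nat) (T : nat -> {set E}) (P : seq nat) : nat :=
  \sum_(ij <- zip (1%N :: P) P) ((n - ij.1) * lenT (T ij.2))%N.
End ESP.

(* Fix a feasible pattern s and let a_k be the length of the shortest prefix of s
   that reaches k vertices.  This prefix is a rooted tree with k vertices, so
   len(T_k) <= 2 a_k, and the k-th vertex reached has latency a_k, so
   sum_{k >= 2} a_k <= L(s).  As the a_k are nondecreasing, it suffices to find a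
   (1,n)-path in H of cost at most e * sum_k a_k when len(T_j) is replaced by a_j.
   Round each a_k up to the geometric grid y * e^Z: the rounded values are still
   nondecreasing and two distinct ones differ by a factor at least e, so the path
   jumping to the last vertex of each block of equal rounded values costs at most
   e/(e-1) times their sum.  For y log-uniformly distributed, rounding inflates
   a_k by the factor e-1 on average; a discrete averaging over the mantissas of
   the a_k produces a y doing at least as well.  The cheapest H-path does not
   depend on s and is no more expensive than any of these paths. *)

From HB Require Import structures.
From mathcomp Require Import all_boot all_order all_algebra.
From mathcomp Require Import boolp reals sequences exp.
From mathcomp Require Import lra ring zify.
Set Implicit Arguments. Unset Strict Implicit. Unset Printing Implicit Defensive.
Import Order.TTheory GRing.Theory Num.Theory.

Section RootedTrees.
Variables (V E : finType) (ends : E -> V * V) (len : E -> nat) (r : V).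

Lemma rverts_set0 : rverts ends r set0 = [set r].
Proof.
by apply/setP => v; rewrite !inE; case: eqP => //= _; apply/existsP => -[e]; rewrite inE.
Qed.

Lemma rooted_tree_set0 : rooted_tree ends r set0.
Proof. by rewrite /rooted_tree rverts_set0 cards1 cards0; split => // v /set1P ->. Qed.

Lemma lenT_set_le (l : seq E) : lenT len [set e in l] <= \sum_(e <- l) len e.
Proof.
elim: l => [|x l IH]; first by rewrite /lenT big_nil big_pred0 // => e; rewrite inE.
have -> : [set e in x :: l] = x |: [set e in l] by apply/setP => e; rewrite !inE.
rewrite /lenT big_cons; case: (boolP (x \in [set e in l])) => [xl | xNl].
  by rewrite (setUidPr _) ?sub1set // (leq_trans IH) ?leq_addl.
by rewrite big_setU1 //= leq_add2l.
Qed.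

End RootedTrees.

Section PrefixTrees.
Variables (V E : finType) (ends : E -> V * V) (len : E -> nat) (r : V) (s : seq E).
Hypothesis s_feasible : feasible ends r s.

Definition prefix_len (j : nat) : nat := \sum_(e <- take j s) len e.
Definition discovered (j : nat) : {set V} := rverts ends r (prefix_set s j).
Definition reached (j : nat) : nat := #|discovered j|.

Lemma prefix_set0 : prefix_set s 0 = set0.
Proof. by apply/setP => e; rewrite !inE take0. Qed.

Lemma prefix_len_mono : {homo prefix_len : j j' / j <= j'}.
Proof. by move=> j j' jj'; rewrite /prefix_len -(subnKC jj') takeD big_cat leq_addr. Qed.

Lemma card_prefix_set_succ j : #|prefix_set s j.+1| <= #|prefix_set s j| + 1.
Proof.
rewrite /prefix_set -addn1 takeD; case: (drop j s) => [|x l] /=; first by rewrite cats0 leq_addr.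
have -> : [set e in take j s ++ [:: x & take 0 l]] = x |: [set e in take j s].
  by apply/setP => e; rewrite take0 !inE mem_cat inE orbC.
by rewrite cardsU1 addnC leq_add2l leq_b1.
Qed.

Lemma rooted_tree_prefix j : j <= size s -> rooted_tree ends r (prefix_set s j).
Proof.
case: j => [_ | j js]; first by rewrite prefix_set0; apply: rooted_tree_set0.
by case: s_feasible => -[_ tree] _; apply: tree.
Qed.

Lemma reachedE j : j <= size s -> reached j = #|prefix_set s j| + 1.
Proof. by move=> /rooted_tree_prefix[]. Qed.

Lemma reached0 : reached 0 = 1.
Proof. by rewrite reachedE // prefix_set0 cards0. Qed.

Lemma reached_succ j : j < size s -> reached j.+1 <= reached j + 1.
Proof. by move=> js; rewrite !reachedE ?(ltnW js) // leq_add2r card_prefix_set_succ. Qed.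

Lemma mem_discovered j v : j <= size s ->
  (v \in discovered j) = (v == r) || (find (inc ends ^~ v) s < j).
Proof.
move=> js; rewrite !inE -has_take_leq //; congr (_ || _).
apply/existsP/hasP => -[e]; first by rewrite inE => /andP[el ev]; exists e.
by move=> el ev; exists e; rewrite inE el.
Qed.

Lemma reached_size : reached (size s) = #|V|.
Proof.
suff all_discovered : discovered (size s) = setT by rewrite /reached all_discovered cardsT.
apply/setP => v; rewrite in_setT mem_discovered //.
by case: (eqVneq v r) => //= /(proj2 s_feasible); rewrite has_find.
Qed.

Definition first_reaching (k : nat) : nat := find (fun j => k <= reached j) (iota 0 (size s).+1).

Lemma first_reaching_mono : {homo first_reaching : k l / k <= l}.
Proof. by move=> k l kl; apply: sub_find => j /=; apply: leq_trans. Qed.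

Lemma first_reaching_gt0 k : 1 < k -> 0 < first_reaching k.
Proof. by move=> k_gt1; rewrite /first_reaching /= reached0 ifN // -ltnNge. Qed.

Lemma reached_before_first k j : j < first_reaching k -> reached j < k.
Proof.
move=> j_lt; have j_size : j < (size s).+1.
  by apply: leq_trans j_lt _; rewrite -[X in _ <= X](size_iota 0) find_size.
by have := before_find 0 j_lt; rewrite nth_iota // add0n ltnNge => ->.
Qed.

Section Reaching.
Variable k : nat.
Hypothesis k_le : k <= #|V|.

Lemma has_reaching : has (fun j => k <= reached j) (iota 0 (size s).+1).
Proof. by apply/hasP; exists (size s); rewrite ?reached_size // mem_iota ltnS leqnn. Qed.

Lemma first_reaching_le_size : first_reaching k <= size s.
Proof. by have := has_reaching; rewrite has_find size_iota ltnS. Qed.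

Lemma le_reached_first : k <= reached (first_reaching k).
Proof. by have := nth_find 0 has_reaching; rewrite nth_iota // ltnS first_reaching_le_size. Qed.

Lemma reached_first : 0 < k -> reached (first_reaching k) = k.
Proof.
move=> k_gt0; apply/eqP; rewrite eqn_leq le_reached_first andbT.
have := first_reaching_le_size; have := @reached_before_first k.
case: (first_reaching k) => [_ _ | j before js]; first by rewrite reached0.
by rewrite (leq_trans (reached_succ js)) // addn1 before.
Qed.

End Reaching.

Lemma kmst_le_prefix_len T : kmst_2approx ends len r T ->
  forall k, 0 < k <= #|V| -> lenT len (T k) <= 2 * prefix_len (first_reaching k).
Proof.
move=> [_ kmst] k k_range; have [_ _ opt] := kmst k k_range.
case/andP: k_range => k_gt0 k_le; have j_size := first_reaching_le_size k_le.
apply: leq_trans (opt _ (rooted_tree_prefix j_size) (reached_first k_le k_gt0)) _.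
by rewrite leq_mul2l lenT_set_le orbT.
Qed.

Definition newcomer (k : nat) : V :=
  odflt r [pick v in discovered (first_reaching k) :\: discovered (first_reaching k).-1].

Section Newcomer.
Variable k : nat.
Hypothesis k_range : 1 < k <= #|V|.

Lemma newcomerP : newcomer k \in discovered (first_reaching k) :\: discovered (first_reaching k).-1.
Proof.
case/andP: k_range => k_gt1 k_le; set j := first_reaching k.
have reached_lt : reached j.-1 < reached j.
  by rewrite reached_first ?(ltnW k_gt1) // reached_before_first // prednK ?first_reaching_gt0.
rewrite /newcomer; case: pickP => // none; exfalso.
suff /subset_leq_card : discovered j \subset discovered j.-1 by rewrite leqNgt reached_lt.
by apply/subsetP => v vj; apply/negPn/negP => vNj; have := none v; rewrite in_setD vNj vj.
Qed.

Lemma find_newcomer :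
  newcomer k != r /\ find (inc ends ^~ (newcomer k)) s = (first_reaching k).-1.
Proof.
case/andP: k_range => k_gt1 k_le; have j_size := first_reaching_le_size k_le.
have j_gt0 := first_reaching_gt0 k_gt1.
have := newcomerP; rewrite in_setD !mem_discovered ?(leq_trans (leq_pred _)) //.
by case: eqP => //= /eqP nr /andP[]; rewrite -leqNgt; split => //; lia.
Qed.

Lemma latency_newcomer : latency ends len r s (newcomer k) = prefix_len (first_reaching k).
Proof.
have [nr find_eq] := find_newcomer; case/andP: k_range => k_gt1 _.
by rewrite /latency (negbTE nr) find_eq prednK ?first_reaching_gt0.
Qed.

End Newcomer.

Lemma newcomer_inj : {in index_iota 2 #|V|.+1 &, injective newcomer}.
Proof.
move=> k l; rewrite !mem_index_iota !ltnS => k_range l_range eq_kl.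
have [[_ find_k] [_ find_l]] := (find_newcomer k_range, find_newcomer l_range).
case/andP: k_range => k_gt1 k_le; case/andP: l_range => l_gt1 l_le.
have eq_first : first_reaching k = first_reaching l.
  by rewrite -(prednK (first_reaching_gt0 k_gt1)) -find_k eq_kl find_l prednK ?first_reaching_gt0.
by rewrite -(reached_first k_le) ?(ltnW k_gt1) // eq_first reached_first // ltnW.
Qed.

Lemma sum_prefix_len_le_latency :
  \sum_(2 <= k < #|V|.+1) prefix_len (first_reaching k) <= total_latency ends len r s.
Proof.
rewrite big_seq (eq_bigr (fun k => latency ends len r s (newcomer k))) => [|k]; last first.
  by rewrite mem_index_iota ltnS => k_range; rewrite latency_newcomer.
rewrite -big_seq -(big_map newcomer xpredT) /total_latency.
apply: (uniq_sub_le_big leqnn (fun m n => leq_addr n m)).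
- by rewrite (map_inj_in_uniq newcomer_inj) iota_uniq.
- by rewrite /index_enum -enumT enum_uniq.
- by move=> v _; rewrite mem_index_enum.
Qed.

End PrefixTrees.

Local Open Scope ring_scope.

Section Averaging.
Variable R : realType.
Local Notation e := (expR (1 : R)).

Lemma ln_ratio_le_sum_increments (N : nat) (p : nat -> R) :
  (forall s, (s <= N)%N -> 0 < p s) ->
  ln (p N / p 0%N) <= \sum_(0 <= s < N) (p s.+1 - p s) / p s.
Proof.
move=> p_gt0; rewrite ln_div ?posrE ?p_gt0 //.
rewrite -(telescope_sumr (fun s => ln (p s))) //.
apply: ler_sum_nat => s /andP[_ sN].
have [ps ps1] := (p_gt0 s (ltnW sN), p_gt0 s.+1 sN).
rewrite -ln_div ?posrE // mulrBl divff ?gt_eqF //.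
have ratio_gt0 : 0 < p s.+1 / p s by rewrite divr_gt0.
by have := @le_ln1Dx R (p s.+1 / p s - 1); rewrite (addrC 1) subrK; apply; lra.
Qed.

Lemma exists_le_weighted_sum (I : finType) (w f : I -> R) :
  (forall i, 0 <= w i) -> (forall i, 0 <= f i) -> 1 <= \sum_i w i ->
  exists i, f i <= \sum_j w j * f j.
Proof.
move=> w_ge0 f_ge0 w_sum.
case: (pickP (fun _ : I => true)) => [i0 _|I0]; last first.
  by move: w_sum; rewrite big_pred0 // ler10.
case: (@arg_minP _ _ _ i0 xpredT f isT) => i _ i_min; exists i.
apply: le_trans (_ : \sum_j w j * f i <= _); last first.
  by apply: ler_sum => j _; apply: ler_wpM2l => //; apply: i_min.
by rewrite -mulr_suml ler_peMl.
Qed.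

Lemma sum_increments_switch (c : R) (N k : nat) (p : nat -> R) :
  (k <= N)%N -> p N = c * p 0%N ->
  \sum_(0 <= s < N) (p s.+1 - p s) * (if (k <= s)%N then 1 else c) = (c - 1) * p k.
Proof.
move=> kN pN; rewrite (@big_cat_nat _ _ _ k) /= ?leq0n //.
rewrite (eq_big_nat _ _ (F2 := fun s => c * (p s.+1 - p s))); last first.
  by move=> s /andP[_ sk]; rewrite leqNgt sk mulrC.
rewrite (eq_big_nat _ _ (F1 := fun s => (p s.+1 - p s) * _)
  (F2 := fun s => p s.+1 - p s)); last first.
  by move=> s /andP[ks _]; rewrite ks mulr1.
by rewrite -mulr_sumr !telescope_sumr // pN; ring.
Qed.

(* Discrete averaging over offsets log-uniform in [p 0, e * p 0): the weights
   (p s.+1 - p s) / p s have total mass at least ln e = 1. *)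
Lemma exists_cheap_cut (N : nat) (p A : nat -> R) :
  (forall s, (s <= N)%N -> 0 < p s) -> (forall s, (s < N)%N -> p s <= p s.+1) ->
  p N = e * p 0%N -> (forall k, 0 <= A k) ->
  exists2 s, (s < N)%N &
    p s * \sum_(0 <= k < N) A k * (if (k <= s)%N then 1 else e)
      <= (e - 1) * \sum_(0 <= k < N) A k * p k.
Proof.
move=> p_gt0 p_mono pN A_ge0.
pose H s := \sum_(0 <= k < N) A k * (if (k <= s)%N then 1 else e).
have e_gt1 : 1 < e by rewrite expR_gt1.
have H_ge0 s : 0 <= H s.
  by apply: sumr_ge0 => k _; rewrite mulr_ge0 //; case: ifP => _ //; lra.
have sum_H : \sum_(0 <= s < N) (p s.+1 - p s) * H s = (e - 1) * \sum_(0 <= k < N) A k * p k.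
  rewrite /H; under eq_bigr do rewrite mulr_sumr.
  rewrite exchange_big mulr_sumr; apply: eq_big_nat => k /andP[_ kN] /=.
  under eq_bigr do rewrite mulrCA.
  by rewrite -mulr_sumr sum_increments_switch ?(ltnW kN) // mulrCA.
have w_sum : 1 <= \sum_(s < N) (p s.+1 - p s) / p s.
  have := ln_ratio_le_sum_increments p_gt0.
  by rewrite pN mulfK ?gt_eqF ?p_gt0 // expRK big_mkord.
have w_ge0 (s : 'I_N) : 0 <= (p s.+1 - p s) / p s.
  by rewrite divr_ge0 ?subr_ge0 ?p_mono // ltW // p_gt0 // ltnW.
have f_ge0 (s : 'I_N) : 0 <= p s * H s by rewrite mulr_ge0 // ltW // p_gt0 // ltnW.
have [s s_min] := exists_le_weighted_sum w_ge0 f_ge0 w_sum.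
exists s => //; rewrite -sum_H [X in _ <= X]big_mkord; apply: (le_trans s_min).
by apply: ler_sum => i _; rewrite mulrA divfK // gt_eqF // p_gt0 // ltnW.
Qed.

Definition scale (x : R) : R := expR (Num.floor (ln x))%:~R.
Definition mantissa (x : R) : R := x / scale x.

Lemma scale_gt0 x : 0 < scale x. Proof. exact: expR_gt0. Qed.

Lemma scale_mantissa x : scale x * mantissa x = x.
Proof. by rewrite mulrC divfK // gt_eqF // scale_gt0. Qed.

Lemma mantissa_ge1 x : 0 < x -> 1 <= mantissa x.
Proof.
move=> x_gt0; rewrite ler_pdivlMr ?scale_gt0 // mul1r.
by rewrite -{2}(lnK x_gt0) ler_expR floor_le.
Qed.

Lemma mantissa_lt_e x : 0 < x -> mantissa x < e.
Proof.
move=> x_gt0; rewrite ltr_pdivrMr ?scale_gt0 // -expRD.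
by rewrite -{1}(lnK x_gt0) ltr_expR addrC -[1]/(1%:~R) -intrD floorD1_gt.
Qed.

Definition geo_ceil (y x : R) : R :=
  if 0 < x then y * expR (Num.ceil (ln (x / y)))%:~R else 0.

Section GeoCeil.
Variable y : R.
Hypothesis y_gt0 : 0 < y.

Lemma geo_ceil_ge0 x : 0 <= geo_ceil y x.
Proof. by rewrite /geo_ceil; case: ifP => // _; rewrite mulr_ge0 ?expR_ge0 ?ltW. Qed.

Lemma geo_ceil_ge x : 0 <= x -> x <= geo_ceil y x.
Proof.
rewrite le0r => /orP[/eqP -> | x_gt0]; first exact: geo_ceil_ge0.
have xy_gt0 : 0 < x / y by rewrite divr_gt0.
rewrite /geo_ceil x_gt0 mulrC -ler_pdivrMr //.
by rewrite -{1}(lnK xy_gt0) ler_expR ceil_ge.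
Qed.

Lemma geo_ceil_le_grid x (w : int) : 0 < x -> x <= y * expR w%:~R ->
  geo_ceil y x <= y * expR w%:~R.
Proof.
move=> x_gt0 x_le; rewrite /geo_ceil x_gt0 ler_pM2l // ler_expR ler_int ceil_le_int.
by rewrite -ler_expR lnK ?posrE ?divr_gt0 // ler_pdivrMr // mulrC.
Qed.

Lemma le_geo_ceil x x' : x <= x' -> geo_ceil y x <= geo_ceil y x'.
Proof.
move=> le_xx'; rewrite {1}/geo_ceil; case: ifPn => [x_gt0 | _]; last exact: geo_ceil_ge0.
have x'_gt0 : 0 < x' by apply: lt_le_trans le_xx'.
rewrite /geo_ceil x'_gt0 ler_pM2l // ler_expR ler_int le_ceil //.
by rewrite ler_ln ?posrE ?divr_gt0 // ler_pM2r ?invr_gt0.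
Qed.

Lemma geo_ceil_gap x x' : geo_ceil y x < geo_ceil y x' -> e * geo_ceil y x <= geo_ceil y x'.
Proof.
rewrite {1 3}/geo_ceil; case: ifPn => [x_gt0 | _]; last by rewrite mulr0 geo_ceil_ge0.
rewrite /geo_ceil; case: ifPn => [x'_gt0 | _]; last first.
  by move=> /ltW; rewrite pmulr_lle0 ?expR_gt0 // leNgt y_gt0.
rewrite ltr_pM2l // ltr_expR ltr_int => lt_cc'.
rewrite mulrCA -expRD ler_pM2l // ler_expR -[1]/(1%:~R) -intrD ler_int addrC.
by rewrite lezD1.
Qed.

End GeoCeil.

Lemma geo_ceil_le_mantissa y x : 1 <= y -> 0 < x ->
  geo_ceil y x <= y * scale x * (if mantissa x <= y then 1 else e).
Proof.
move=> y_ge1 x_gt0; have y_gt0 : 0 < y by apply: lt_le_trans y_ge1.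
have x_scale : x = scale x * mantissa x by rewrite scale_mantissa.
have scale_ge0 : 0 <= scale x by rewrite ltW ?scale_gt0.
case: ifPn => [m_le | _].
  rewrite mulr1; apply: geo_ceil_le_grid => //.
  by rewrite [X in X <= _]x_scale mulrC ler_wpM2r.
have grid : y * scale x * e = y * expR (Num.floor (ln x) + 1)%:~R.
  by rewrite intrD expRD mulrA.
rewrite grid; apply: geo_ceil_le_grid => //; rewrite -grid.
apply: le_trans (_ : scale x * e <= _).
  by rewrite [X in X <= _]x_scale ler_wpM2l // ltW // mantissa_lt_e.
by rewrite ler_wpM2r ?expR_ge0 // ler_peMl.
Qed.

Lemma exists_geo_ceil_sum_le_sorted (xs : seq R) :
  all (> 0) xs -> sorted (fun x z => mantissa x <= mantissa z) xs ->
  exists2 y, 0 < y & \sum_(x <- xs) geo_ceil y x <= (e - 1) * \sum_(x <- xs) x.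
Proof.
move=> xs_gt0 xs_sorted; have e_gt1 : 1 < e by rewrite expR_gt1.
have [-> | xs_nil] := eqVneq xs [::]; first by exists 1; rewrite ?big_nil ?mulr0.
set N := size xs; have N_gt0 : (0 < N)%N by rewrite lt0n size_eq0.
pose x_ k := nth 0 xs k.
have x_gt0 k : (k < N)%N -> 0 < x_ k by move=> kN; apply: (allP xs_gt0); rewrite mem_nth.
have mantissa_sorted i j : (i <= j)%N -> (j < N)%N -> mantissa (x_ i) <= mantissa (x_ j).
  move=> ij jN; apply: (sorted_leq_nth _ _ 0 xs_sorted); rewrite ?inE //.
  - by move=> ? ? ?; apply: le_trans.
  - by apply: leq_ltn_trans jN.
(* The candidate offsets: the sorted mantissas, closed up cyclically by e * p 0. *)
pose p s := if (s < N)%N then mantissa (x_ s) else e * mantissa (x_ 0%N).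
have p_ge1 s : 1 <= p s.
  rewrite /p; case: ifP => [sN | _]; first by rewrite mantissa_ge1 ?x_gt0.
  by rewrite mulr_ege1 ?mantissa_ge1 ?x_gt0 // ltW.
have p_mono s : (s < N)%N -> p s <= p s.+1.
  move=> sN; rewrite /p sN; case: ifP => [sN' | _].
    exact: mantissa_sorted.
  apply: le_trans (ltW (mantissa_lt_e (x_gt0 _ sN))) _.
  by rewrite ler_peMr ?expR_ge0 // mantissa_ge1 ?x_gt0.
have pN : p N = e * p 0%N by rewrite /p ltnn N_gt0.
have [s sN cut] := exists_cheap_cut (fun k _ => lt_le_trans ltr01 (p_ge1 k)) p_mono pN
  (fun k => ltW (scale_gt0 (x_ k))).
exists (p s); first exact: lt_le_trans ltr01 (p_ge1 s).
have -> : \sum_(x <- xs) x = \sum_(0 <= k < N) scale (x_ k) * p k.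
  by rewrite (big_nth 0); apply: eq_big_nat => k /andP[_ kN]; rewrite /p kN scale_mantissa.
apply: le_trans cut; rewrite (big_nth 0) mulr_sumr; apply: ler_sum_nat => k /andP[_ kN].
apply: le_trans (geo_ceil_le_mantissa (p_ge1 s) (x_gt0 k kN)) _.
rewrite -mulrA ler_wpM2l ?(le_trans ler01 (p_ge1 s)) // ler_wpM2l ?(ltW (scale_gt0 _)) //.
have [ks | sk] := leqP k s; first by rewrite /p sN mantissa_sorted.
by case: ifP => _; rewrite ?(ltW e_gt1).
Qed.

Lemma exists_geo_ceil_sum_le (xs : seq R) : all (>= 0) xs ->
  exists2 y, 0 < y & \sum_(x <- xs) geo_ceil y x <= (e - 1) * \sum_(x <- xs) x.
Proof.
move=> xs_ge0.
pose ys := sort (fun x z => mantissa x <= mantissa z) [seq x <- xs | 0 < x].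
have ys_perm : perm_eq ys [seq x <- xs | 0 < x] by rewrite perm_sort.
have [||y y_gt0 ys_le] := @exists_geo_ceil_sum_le_sorted ys.
- by rewrite (perm_all _ ys_perm) filter_all.
- by apply: sort_sorted => x z; apply: le_total.
exists y => //.
have sum_geo_ceil : \sum_(x <- xs) geo_ceil y x = \sum_(x <- ys) geo_ceil y x.
  rewrite (perm_big _ ys_perm) big_filter [RHS]big_mkcond; apply: eq_bigr => x _.
  by rewrite /geo_ceil; case: ifP.
have sum_id : \sum_(x <- ys) x = \sum_(x <- xs) x.
  rewrite (perm_big _ ys_perm) big_filter [LHS]big_mkcond /=.
  apply: eq_big_seq => x /(allP xs_ge0).
  by rewrite le_eqVlt => /predU1P[<- | ->]; rewrite ?if_same.
by rewrite sum_geo_ceil -sum_id.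
Qed.

End Averaging.

Lemma mem_path_ltn (i j : nat) (P : seq nat) :
  path ltn i P -> j \in P -> (i < j <= last i P)%N.
Proof.
elim: P i j => [|k P IH] i j //= /andP[ik kP].
have k_last : (k <= last k P)%N.
  case: P IH kP => [|m P] // IH kP.
  by have /andP[/ltnW km ml] := IH k m kP (mem_head m P); apply: leq_trans ml.
rewrite inE => /predU1P[-> | /(IH k j kP) /andP[kj ->]]; first by rewrite ik.
by rewrite (ltn_trans ik kj).
Qed.

Section PathCost.
Variable R : realType.
Local Notation e := (expR (1 : R)).

Definition path_cost (n : nat) (a : nat -> R) (i : nat) (P : seq nat) : R :=
  \sum_(ij <- zip (i :: P) P) (n - ij.1)%:R * a ij.2.

Lemma path_cost_nil n a i : path_cost n a i [::] = 0.
Proof. by rewrite /path_cost big_nil. Qed.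

Lemma path_cost_cons n a i j P :
  path_cost n a i (j :: P) = (n - i)%:R * a j + path_cost n a j P.
Proof. by rewrite /path_cost big_cons. Qed.

Lemma ler_path_cost n a b i P : {in P, forall j, a j <= b j} ->
  path_cost n a i P <= path_cost n b i P.
Proof.
elim: P i => [|j P IH] i ab; first by rewrite !path_cost_nil.
rewrite !path_cost_cons lerD ?ler_wpM2l ?ab ?mem_head // IH // => k kP.
by rewrite ab // inE kP orbT.
Qed.

Lemma threshold_block (q : R) (n : nat) (t : nat -> R) (i : nat) :
  (forall k l, (k <= l <= n)%N -> t k <= t l) ->
  (forall k l, t k < t l -> q * t k <= t l) -> (i < n)%N ->
  exists j, [/\ (i < j <= n)%N, forall k, (i < k <= j)%N -> t k = t i.+1 &
    forall k, (j < k <= n)%N -> q * t i.+1 <= t k].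
Proof.
move=> t_mono t_gap i_lt_n; set T := t i.+1.
have ex_j : exists k, (k <= n)%N && (t k <= T) by exists i.+1; rewrite i_lt_n lexx.
have ub_j k : (k <= n)%N && (t k <= T) -> (k <= n)%N by case/andP.
case: (ex_maxnP ex_j ub_j) => j /andP[j_n tj_T] j_max.
have i_j : (i < j)%N by apply: j_max; rewrite i_lt_n lexx.
exists j; split => [|k /andP[ik kj] | k /andP[jk kn]]; first by rewrite i_j.
  by apply/eqP; rewrite eq_le (le_trans _ tj_T) ?t_mono //=; lia.
apply: t_gap; rewrite ltNge; apply/negP => tk_T.
by have := j_max k; rewrite kn tk_T leqNgt jk => /(_ isT).
Qed.

Lemma threshold_path (q : R) (n : nat) (t : nat -> R) : 1 < q ->
  (forall k l, (k <= l <= n)%N -> t k <= t l) ->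
  (forall k l, t k < t l -> q * t k <= t l) ->
  forall i th, (i <= n)%N -> (forall k, (i < k <= n)%N -> q * th <= t k) ->
  exists P, [/\ path ltn i P, last i P = n &
    path_cost n t i P <= q / (q - 1) * \sum_(i.+1 <= k < n.+1) (t k - th)].
Proof.
move=> q_gt1 t_mono t_gap i; have [d] := ubnP (n - i).
elim: d i => // d IH i ni_d th i_n th_low.
have [->{i i_n ni_d th_low} | i_ne_n] := eqVneq i n.
  by exists [::]; rewrite path_cost_nil big_geq ?mulr0.
have i_lt_n : (i < n)%N by rewrite ltn_neqAle i_ne_n.
have [j [/andP[i_j j_n] t_mid t_high]] := threshold_block t_mono t_gap i_lt_n.
set T := t i.+1 in t_mid t_high *.
have T_low : q * th <= T by apply: th_low; rewrite i_lt_n ltnSn.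
have [|P [P_path P_last P_cost]] := IH j _ T j_n t_high; first lia.
exists (j :: P); split => //=; first by rewrite i_j.
rewrite path_cost_cons t_mid ?i_j ?leqnn //.
rewrite (@big_cat_nat _ _ _ j.+1) ?ltnS ?(ltnW i_j) //=.
rewrite (eq_big_nat _ _ (F2 := fun => T - th)); last first.
  by move=> k /andP[ik kj]; rewrite t_mid // ik.
rewrite sumr_const_nat (eq_bigr (fun k => (t k - T) + (T - th))); last first.
  by move=> k _; rewrite addrA subrK.
rewrite big_split /= sumr_const_nat.
set c := q / (q - 1); set S := \sum_(j.+1 <= k < n.+1) (t k - T).
have T_le : T <= c * (T - th).
  have q1_gt0 : 0 < q - 1 by rewrite subr_gt0.
  by rewrite /c mulrAC ler_pdivlMr //; nra.
suff -> : c * ((T - th) *+ (j.+1 - i.+1) + (S + (T - th) *+ (n.+1 - j.+1))) =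
    (n - i)%:R * (c * (T - th)) + c * S by rewrite lerD // ler_wpM2l.
have -> : (n - i)%N = ((j.+1 - i.+1) + (n.+1 - j.+1))%N by lia.
by rewrite natrD; ring.
Qed.

Lemma exists_cheap_path (n : nat) (a : nat -> R) : (0 < n)%N ->
  (forall k, 0 <= a k) -> {homo a : k l / (k <= l)%N >-> k <= l} ->
  exists P, [/\ path ltn 1%N P, last 1%N P = n &
    path_cost n a 1 P <= e * \sum_(2 <= k < n.+1) a k].
Proof.
move=> n_gt0 a_ge0 a_mono; have e_gt1 : 1 < e by rewrite expR_gt1.
have [|y y_gt0 y_avg] := @exists_geo_ceil_sum_le R [seq a k | k <- index_iota 2 n.+1].
  by apply/allP => _ /mapP[k _ ->].
rewrite !big_map in y_avg.
have [|||P [P_path P_last P_cost]] :=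
  @threshold_path e n (fun k => geo_ceil y (a k)) e_gt1 _ _ 1%N 0 n_gt0.
- by move=> k l /andP[kl _]; apply/le_geo_ceil/a_mono.
- by move=> k l; apply: geo_ceil_gap.
- by move=> k _; rewrite mulr0 geo_ceil_ge0.
exists P; split => //.
apply: le_trans (_ : path_cost n (fun k => geo_ceil y (a k)) 1 P <= _).
  by apply: ler_path_cost => j _; apply: geo_ceil_ge.
apply: (le_trans P_cost); under eq_bigr do rewrite subr0.
apply: le_trans (ler_wpM2l _ y_avg) _; first by rewrite divr_ge0 ?subr_ge0 ?expR_ge0 ?ltW.
by rewrite mulrA divfK // subr_eq0 gt_eqF.
Qed.

End PathCost.

Lemma ex_minimizer (A : Type) (P : A -> Prop) (f : A -> nat) :
  (exists x, P x) -> exists2 x, P x & forall y, P y -> (f x <= f y)%N.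
Proof.
move=> [x Px]; have ex_m : exists m, `[< exists2 x, P x & f x = m >].
  by exists (f x); apply/asboolP; exists x.
case: (ex_minnP ex_m) => m /asboolP[x' Px' <-] m_min; exists x' => // y Py.
by apply: m_min; apply/asboolP; exists y.
Qed.

Lemma exists_H_path (n : nat) : (0 < n)%N -> exists P, H_path n P.
Proof.
move=> n_gt0; exists (if n == 1%N then [::] else [:: n]); rewrite /H_path.
by case: eqP => [-> | /eqP n_ne1] //=; rewrite eqxx !andbT ltn_neqAle eq_sym n_ne1.
Qed.

Lemma H_costE (R : realType) (E : finType) (len : E -> nat) n T P :
  (H_cost len n T P)%:R = path_cost n (fun j => (lenT len (T j))%:R : R) 1 P.
Proof. by rewrite /H_cost natr_sum; apply: eq_bigr => ij _; rewrite natrM. Qed.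

Theorem lemma3 (R : realType) (V E : finType) (ends : E -> V * V) (len : E -> nat)
  (r : V) (T : nat -> {set E}) :
  simple_graph ends -> connected_graph ends r ->
  (forall e, (0 < len e)%N) ->
  kmst_2approx ends len r T ->
  exists P : seq nat,
    H_path #|V| P /\
    forall s : seq E, feasible ends r s ->
      (H_cost len #|V| T P)%:R <= 2 * expR (1 : R) * (total_latency ends len r s)%:R.
Proof.
move=> _ _ _ T_kmst; set n := #|V|.
have n_gt0 : (0 < n)%N by apply/card_gt0P; exists r.
have [P P_path P_min] := ex_minimizer (H_cost len n T) (exists_H_path n_gt0).
exists P; split => // s s_feasible.
pose a k := (2 * prefix_len len s (first_reaching ends r s k))%:R : R.
have a_mono : {homo a : k l / (k <= l)%N >-> k <= l}.
  by move=> k l kl; rewrite ler_nat leq_mul2l prefix_len_mono ?first_reaching_mono ?orbT.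
have [Q [Q_path Q_last Q_cost]] := exists_cheap_path n_gt0 (fun k => ler0n R _) a_mono.
apply: le_trans (_ : (H_cost len n T Q)%:R <= _).
  by rewrite ler_nat P_min // /H_path Q_path Q_last eqxx.
rewrite H_costE; apply: le_trans (le_trans _ Q_cost) _.
  apply: ler_path_cost => j /(mem_path_ltn Q_path); rewrite Q_last => /andP[j_gt1 j_le].
  by rewrite ler_nat kmst_le_prefix_len // j_le (ltnW j_gt1).
rewrite [2 * _]mulrC -mulrA ler_pM2l ?expR_gt0 // -natr_sum -natrM ler_nat.
by rewrite -big_distrr leq_mul2l sum_prefix_len_le_latency.
Qed.
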